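(* (Descent lemma.) Suppose $\theta$ is $\varepsilon_0$-close to $\mathcal{S}$ in the $P$-norm. Let $\theta^{\star}$ denote the projection of $\theta$ onto $\mathcal{S}$ in the $P$-norm and $\Delta=\theta-\theta^{\star}$. Then $$Q(\theta) - Q^{\star} \le \frac{\sqrt{\beta}}{2}\|\Delta\|_P^2,$$ where $Q^{\star}$ is the minimum value of $Q$.
   Context: Covariates $x\sim\mathcal{N}(0,\Sigma)$ with $\Sigma$ full rank, responses $y=Mx+z$, $z\sim\mathcal{N}(0,\Omega)$; $p\ge d$, $M\Sigma^{1/2}$ full column rank. $\theta=(A,B)$, $A\in\mathbb{R}^{p\times d}$, $B\in\mathbb{R}^{d\times d}$. Population loss $L(\theta)=\frac12\mathrm{Tr}(\Omega)+\frac12\|A\Sigma B^{\top}\Sigma^{1/2}-M\Sigma^{1/2}\|_F^2$ (closed form of the population loss of softmax self-attention), $R(\theta)=\frac18\|\Sigma^{1/2}(A^{\top}A-B^{\top}\Sigma B)\Sigma^{1/2}\|_F^2$, $Q=L+R$. With $U\Gamma V^{\top}$ an SVD of $M\Sigma^{1/2}$, $\mathcal{S}=\{(U\Gamma^{1/2}J^{\top}\Sigma^{-1/2};\ \Sigma^{-1/2}V\Gamma^{1/2}J^{\top}\Sigma^{-1/2}):J\in\mathbb{O}_d\}$ (the set of global minimizers of $Q$). $P=\mathrm{diag}(I_p,\Sigma)$, $\langle\theta_1,\theta_2\rangle_P=\mathrm{Tr}(\theta_1^{\top}P\theta_2)$. $K_0=2\sigma_d(M\Sigma^{1/2})\sigma_d(\Sigma)$,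 $K_1=2\sigma_1(M\Sigma^{1/2})\sigma_1(\Sigma)$, $\varepsilon_0=\min\left(1,\frac{\sqrt{K_0}}{\sqrt{3K_1\|\Sigma\|_{\mathrm{op}}}},\frac{(K_0/2)^{1/4}}{\sqrt{\|\Sigma\|_{\mathrm{op}}}}\right)$, $\beta=(14+7\kappa^2(\Sigma))K_1^2+21\|\Sigma\|_{\mathrm{op}}^2K_1+7\|\Sigma\|_{\mathrm{op}}^4$. Within $P$-distance $\varepsilon_0$ of $\mathcal{S}$ the one-point smoothness bound $\|P^{-1}\nabla Q(\theta)\|_P^2\le\beta\|\theta-\theta^{\star}\|_P^2$ holds. *)

From mathcomp Require Import all_boot all_order all_algebra.
Set Implicit Arguments. Unset Strict Implicit. Unset Printing Implicit Defensive.
Import Order.TTheory GRing.Theory Num.Theory.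
Local Open Scope ring_scope.

Section Defs.
Variable R : rcfType.

Definition frob2 m n (X : 'M[R]_(m, n)) : R := \tr (X^T *m X).

Definition orthonormal_cols m n (U : 'M[R]_(m, n)) : Prop := U^T *m U = 1%:M.

Definition psd_sym n (X : 'M[R]_n) : Prop :=
  X^T = X /\ forall v : 'cV[R]_n, 0 <= (v^T *m X *m v) 0 0.

(* Sigma^{1/2} built from an eigendecomposition Sigma = W diag(lam) W^T *)
Definition mx_sqrt_eig n (W : 'M[R]_n) (lam : 'rV[R]_n) : 'M[R]_n :=
  W *m diag_mx (map_mx Num.sqrt lam) *m W^T.

Definition vmax n (v : 'rV[R]_n) : R := \big[Num.max/0]_(i < n) v 0 i.
Definition vmin n (v : 'rV[R]_n) : R := \big[Num.min/vmax v]_(i < n) v 0 i.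

(* P = diag(I_p, Sigma); <th1, th2>_P = Tr(th1^T P th2), th = (A; B) stacked *)
Definition Pmat p d (Sigma : 'M[R]_d) : 'M[R]_(p + d) := block_mx 1%:M 0 0 Sigma.
Definition Pnorm2 p d (Sigma : 'M[R]_d) (A : 'M[R]_(p, d)) (B : 'M[R]_d) : R :=
  \tr ((col_mx A B)^T *m Pmat p Sigma *m col_mx A B).

(* population loss L, regularizer R, Q = L + R; Sh = Sigma^{1/2} *)
Definition Lpop p d (Sigma Sh : 'M[R]_d) (M : 'M[R]_(p, d)) (Omega : 'M[R]_p)
    (A : 'M[R]_(p, d)) (B : 'M[R]_d) : R :=
  2^-1 * \tr Omega + 2^-1 * frob2 (A *m Sigma *m B^T *m Sh - M *m Sh).
Definition Rreg p d (Sigma Sh : 'M[R]_d) (A : 'M[R]_(p, d)) (B : 'M[R]_d) : R :=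
  8^-1 * frob2 (Sh *m (A^T *m A - B^T *m Sigma *m B) *m Sh).
Definition Qobj p d (Sigma Sh : 'M[R]_d) (M : 'M[R]_(p, d)) (Omega : 'M[R]_p)
    (A : 'M[R]_(p, d)) (B : 'M[R]_d) : R :=
  Lpop Sigma Sh M Omega A B + Rreg Sigma Sh A B.

(* the set S of global minimizers, given an SVD U diag(g) V^T of M Sigma^{1/2} *)
Definition Sset p d (Sh : 'M[R]_d) (U : 'M[R]_(p, d)) (g : 'rV[R]_d) (V : 'M[R]_d)
    (A : 'M[R]_(p, d)) (B : 'M[R]_d) : Prop :=
  let Gh := diag_mx (map_mx Num.sqrt g) in
  let Shi := invmx Sh in
  exists J : 'M[R]_d, orthonormal_cols J /\
    A = U *m Gh *m J^T *m Shi /\ B = Shi *m V *m Gh *m J^T *m Shi.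

End Defs.

From mathcomp Require Import all_boot all_order all_algebra.
From mathcomp Require Import ring lra.
Import Order.TTheory GRing.Theory Num.Theory.
Set Implicit Arguments. Unset Strict Implicit. Unset Printing Implicit Defensive.
Local Open Scope ring_scope.

(* In the coordinates x = A Σ^{1/2}, y = Σ^{1/2} B Σ^{1/2} the objective reads
   Q = Tr Ω / 2 + ‖x yᵀ − M Σ^{1/2}‖² / 2 + ‖xᵀ x − yᵀ y‖² / 8, and every point (x⋆, y⋆)
   of S is a balanced factorization, x⋆ y⋆ᵀ = M Σ^{1/2} and x⋆ᵀ x⋆ = y⋆ᵀ y⋆, whose factors
   have spectral norm at most √σ₁(M Σ^{1/2}).  Expanding both residuals around (x⋆, y⋆)
   gives Q(θ) − Q⋆ ≤ Q(θ) − Tr Ω / 2 ≤ 3 σ₁ r + 3 r² / 4 with r = ‖x − x⋆‖² + ‖y − y⋆‖²,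
   and r ≤ ‖Σ‖ ‖Δ‖²_P; since ‖Δ‖_P ≤ ε₀ ≤ 1, r² is also a multiple of ‖Δ‖²_P. *)

Section Frobenius.
Variable R : rcfType.
Implicit Types m n k : nat.

Definition frob_dot m n (X Y : 'M[R]_(m, n)) : R := \tr (X^T *m Y).

Lemma frob_dotE m n (X Y : 'M[R]_(m, n)) : frob_dot X Y = \sum_i \sum_j X i j * Y i j.
Proof.
rewrite /frob_dot /mxtrace exchange_big /=; apply: eq_bigr => j _.
by rewrite mxE; apply: eq_bigr => i _; rewrite mxE.
Qed.

Lemma frob2_dot m n (X : 'M[R]_(m, n)) : frob2 X = frob_dot X X.
Proof. by []. Qed.

Lemma frob2E m n (X : 'M[R]_(m, n)) : frob2 X = \sum_i \sum_j X i j ^+ 2.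
Proof.
rewrite frob2_dot frob_dotE; apply: eq_bigr => i _.
by apply: eq_bigr => j _; rewrite expr2.
Qed.

Lemma frob2_ge0 m n (X : 'M[R]_(m, n)) : 0 <= frob2 X.
Proof. by rewrite frob2E; do 2![apply: sumr_ge0 => ? _]; apply: sqr_ge0. Qed.

Lemma frob2_tr m n (X : 'M[R]_(m, n)) : frob2 X^T = frob2 X.
Proof. by rewrite /frob2 trmxK mxtrace_mulC. Qed.

Lemma frob_dotC m n (X Y : 'M[R]_(m, n)) : frob_dot X Y = frob_dot Y X.
Proof. by rewrite !frob_dotE; apply: eq_bigr => i _; apply: eq_bigr => j _; rewrite mulrC. Qed.

Lemma frob_dotDl m n (X Y Z : 'M[R]_(m, n)) :
  frob_dot (X + Y) Z = frob_dot X Z + frob_dot Y Z.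
Proof. by rewrite /frob_dot linearD mulmxDl mxtraceD. Qed.

Lemma frob_dotDr m n (X Y Z : 'M[R]_(m, n)) :
  frob_dot X (Y + Z) = frob_dot X Y + frob_dot X Z.
Proof. by rewrite /frob_dot mulmxDr mxtraceD. Qed.

Lemma frob_dotZl m n a (X Y : 'M[R]_(m, n)) : frob_dot (a *: X) Y = a * frob_dot X Y.
Proof. by rewrite /frob_dot linearZ -scalemxAl mxtraceZ. Qed.

Lemma frob_dotZr m n a (X Y : 'M[R]_(m, n)) : frob_dot X (a *: Y) = a * frob_dot X Y.
Proof. by rewrite frob_dotC frob_dotZl frob_dotC. Qed.

Lemma frob_dotNr m n (X Y : 'M[R]_(m, n)) : frob_dot X (- Y) = - frob_dot X Y.
Proof. by rewrite -scaleN1r frob_dotZr mulN1r. Qed.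

Lemma frob2D m n (X Y : 'M[R]_(m, n)) :
  frob2 (X + Y) = frob2 X + 2 * frob_dot X Y + frob2 Y.
Proof.
rewrite !frob2_dot frob_dotDl !frob_dotDr (frob_dotC Y X); ring.
Qed.

Lemma frob2Z m n a (X : 'M[R]_(m, n)) : frob2 (a *: X) = a ^+ 2 * frob2 X.
Proof. by rewrite !frob2_dot frob_dotZl frob_dotZr mulrA -expr2. Qed.

Lemma frob2N m n (X : 'M[R]_(m, n)) : frob2 (- X) = frob2 X.
Proof. by rewrite -scaleN1r frob2Z sqrrN expr1n mul1r. Qed.

Lemma frob_dot_le m n (X Y : 'M[R]_(m, n)) : 2 * frob_dot X Y <= frob2 X + frob2 Y.
Proof. by have := frob2_ge0 (X - Y); rewrite frob2D frob2N frob_dotNr; lra. Qed.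

Lemma frob_dot_CauchySchwarz m n (X Y : 'M[R]_(m, n)) :
  frob_dot X Y ^+ 2 <= frob2 X * frob2 Y.
Proof.
set a := frob2 X; set b := frob2 Y; set c := frob_dot X Y.
have a0 : 0 <= a := frob2_ge0 X; have b0 : 0 <= b := frob2_ge0 Y.
have hX : 0 <= b * (a * b - c ^+ 2).
  have := frob2_ge0 (b *: X + (- c) *: Y).
  by rewrite frob2D !frob2Z frob_dotZl frob_dotZr -/a -/b -/c; nra.
have hY : 0 <= a * (a * b - c ^+ 2).
  have := frob2_ge0 (a *: Y + (- c) *: X).
  by rewrite frob2D !frob2Z frob_dotZl frob_dotZr frob_dotC -/a -/b -/c; nra.
have hc1 := frob_dot_le X Y; have hc2 := frob_dot_le X (- Y).
rewrite frob_dotNr -/c frob2N -/a -/b in hc2.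
rewrite -/c -/a -/b in hc1.
have [ab0|ab0] := eqVneq (a + b) 0.
  have -> : c = 0 by lra.
  by rewrite expr0n mulr_ge0.
have hab : 0 < a + b by rewrite lt_def ab0 addr_ge0.
by rewrite -subr_ge0 -(pmulr_rge0 _ hab) mulrDl; lra.
Qed.

Lemma frob2_sub_le m n (X Y : 'M[R]_(m, n)) : frob2 (X - Y) <= 2 * (frob2 X + frob2 Y).
Proof. by have := frob_dot_le X (- Y); rewrite frob2D frob2N; lra. Qed.

Lemma frob2_add3_le m n (X Y Z : 'M[R]_(m, n)) :
  frob2 (X + Y + Z) <= 3 * (frob2 X + frob2 Y + frob2 Z).
Proof.
rewrite !frob2D frob_dotDl.
have := frob_dot_le X Y; have := frob_dot_le X Z; have := frob_dot_le Y Z; lra.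
Qed.

Lemma frob2_mul_le m n k (X : 'M[R]_(m, n)) (Y : 'M[R]_(n, k)) :
  frob2 (X *m Y) <= frob2 X * frob2 Y.
Proof.
have entryE (i : 'I_m) (l : 'I_k) : (X *m Y) i l = frob_dot (row i X) (col l Y)^T.
  by rewrite frob_dotE big_ord1 mxE; apply: eq_bigr => j _; rewrite !mxE.
have rowE i : frob2 (row i X) = \sum_j X i j ^+ 2.
  by rewrite frob2E big_ord1; apply: eq_bigr => j _; rewrite mxE.
have colE (l : 'I_k) : frob2 (col l Y)^T = \sum_j Y j l ^+ 2.
  by rewrite frob2E big_ord1; apply: eq_bigr => j _; rewrite !mxE.
rewrite (frob2E (X *m Y)) (frob2E X) (frob2E Y) mulr_suml; apply: ler_sum => i _.
rewrite exchange_big /= mulr_sumr; apply: ler_sum => l _.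
by rewrite entryE -rowE -colE frob_dot_CauchySchwarz.
Qed.

Lemma frob2_orth_mulmx m n k (Y : 'M[R]_(m, n)) (X : 'M[R]_(n, k)) :
  orthonormal_cols Y -> frob2 (Y *m X) = frob2 X.
Proof. by move=> hY; rewrite /frob2 trmx_mul -mulmxA (mulmxA Y^T) hY mul1mx. Qed.

Lemma frob2_tr_orth_mulmx_le m n k (Y : 'M[R]_(m, n)) (X : 'M[R]_(m, k)) :
  orthonormal_cols Y -> frob2 (Y^T *m X) <= frob2 X.
Proof.
move=> hY; set PX := Y *m (Y^T *m X).
have orthPX : frob_dot PX (X - PX) = 0.
  rewrite /frob_dot /PX mulmxBr !trmx_mul trmxK !mulmxA -(mulmxA _ Y^T Y) hY mulmx1.
  by rewrite subrr mxtrace0.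
rewrite -(frob2_orth_mulmx _ hY) -/PX -{1}(subrKC PX X) frob2D orthPX mulr0 addr0.
by rewrite lerDl frob2_ge0.
Qed.

Lemma frob2_diag_mulmx_le n k (c : 'rV[R]_n) (X : 'M[R]_(n, k)) (s : R) :
  (forall j, c 0 j ^+ 2 <= s) -> frob2 (diag_mx c *m X) <= s * frob2 X.
Proof.
move=> hc; rewrite !frob2E mulr_sumr; apply: ler_sum => i _.
rewrite mulr_sumr; apply: ler_sum => j _; rewrite mul_diag_mx mxE exprMn.
by rewrite ler_wpM2r ?sqr_ge0.
Qed.

Definition sq_opnorm_le m n (Z : 'M[R]_(m, n)) (s : R) : Prop :=
  (forall k (X : 'M[R]_(n, k)), frob2 (Z *m X) <= s * frob2 X) /\
  (forall k (X : 'M[R]_(m, k)), frob2 (Z^T *m X) <= s * frob2 X).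

Lemma sq_opnorm_le_svd m n (Y : 'M[R]_(m, n)) (J : 'M[R]_n) (c : 'rV[R]_n) (s : R) :
  orthonormal_cols Y -> orthonormal_cols J -> 0 <= s -> (forall j, c 0 j ^+ 2 <= s) ->
  sq_opnorm_le (Y *m diag_mx c *m J^T) s.
Proof.
move=> hY hJ s0 hc; split=> k X.
  have hJT : orthonormal_cols J^T by rewrite /orthonormal_cols trmxK; exact: mulmx1C.
  rewrite -!mulmxA frob2_orth_mulmx // -(frob2_orth_mulmx X hJT).
  exact: frob2_diag_mulmx_le.
rewrite !trmx_mul trmxK tr_diag_mx -!mulmxA frob2_orth_mulmx //.
apply: (le_trans (frob2_diag_mulmx_le _ hc)).
by rewrite ler_wpM2l // frob2_tr_orth_mulmx_le.
Qed.

Lemma vmax_ge n (v : 'rV[R]_n) j : v 0 j <= vmax v.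
Proof. by rewrite /vmax (bigD1 j) //= le_max lexx. Qed.

Lemma vmax_ge0 n (v : 'rV[R]_n) : 0 <= vmax v.
Proof. by rewrite /vmax; elim/big_rec: _ => // i x _ hx; rewrite le_max hx orbT. Qed.

Lemma frob2_mulmx_tr_perturb m n k (xs u : 'M[R]_(m, n)) (ys v : 'M[R]_(k, n)) (s : R) :
  sq_opnorm_le xs s -> sq_opnorm_le ys s ->
  frob2 ((xs + u) *m (ys + v)^T - xs *m ys^T)
    <= 3 * (s * frob2 u + s * frob2 v + frob2 u * frob2 v).
Proof.
move=> [hxs _] [hys _].
have -> : (xs + u) *m (ys + v)^T - xs *m ys^T = u *m ys^T + xs *m v^T + u *m v^T.
  rewrite [(ys + v)^T]linearD /= mulmxDl !mulmxDr addrAC [_ + _ - _]addrAC subrr add0r.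
  by rewrite addrA (addrC (xs *m v^T)).
apply: (le_trans (frob2_add3_le _ _ _)); rewrite ler_pM2l //.
have h1 : frob2 (u *m ys^T) <= s * frob2 u.
  by rewrite -frob2_tr trmx_mul trmxK -(frob2_tr u); apply: hys.
have h2 : frob2 (xs *m v^T) <= s * frob2 v by rewrite -(frob2_tr v); apply: hxs.
have h3 : frob2 (u *m v^T) <= frob2 u * frob2 v by rewrite -(frob2_tr v) frob2_mul_le.
lra.
Qed.

Lemma frob2_gram_perturb m n (xs u : 'M[R]_(m, n)) (s : R) :
  sq_opnorm_le xs s ->
  frob2 ((xs + u)^T *m (xs + u) - xs^T *m xs) <= 3 * (2 * s * frob2 u + frob2 u ^+ 2).
Proof.
move=> [_ hxsT].
have -> : (xs + u)^T *m (xs + u) - xs^T *m xs = xs^T *m u + u^T *m xs + u^T *m u.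
  by rewrite [(xs + u)^T]linearD /= !mulmxDl !mulmxDr addrAC [_ + _ - _]addrAC subrr add0r addrA.
apply: (le_trans (frob2_add3_le _ _ _)); rewrite ler_pM2l //.
have h1 : frob2 (xs^T *m u) <= s * frob2 u by apply: hxsT.
have h2 : frob2 (u^T *m xs) = frob2 (xs^T *m u) by rewrite -frob2_tr trmx_mul trmxK.
have h3 : frob2 (u^T *m u) <= frob2 u ^+ 2 by rewrite expr2 -{1}(frob2_tr u) frob2_mul_le.
lra.
Qed.

Lemma balanced_residual_le m n k (N : 'M[R]_(m, k)) (x xs : 'M[R]_(m, n))
    (y ys : 'M[R]_(k, n)) (s : R) :
  xs *m ys^T = N -> xs^T *m xs = ys^T *m ys -> sq_opnorm_le xs s -> sq_opnorm_le ys s ->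
  2^-1 * frob2 (x *m y^T - N) + 8^-1 * frob2 (x^T *m x - y^T *m y)
    <= 3 * s * (frob2 (x - xs) + frob2 (y - ys))
       + 3 / 4 * (frob2 (x - xs) + frob2 (y - ys)) ^+ 2.
Proof.
move=> hN hG hxs hys.
have E1 := frob2_mulmx_tr_perturb (x - xs) (y - ys) hxs hys.
have E2x := frob2_gram_perturb (x - xs) hxs.
have E2y := frob2_gram_perturb (y - ys) hys.
rewrite !subrKC hN in E1 E2x E2y.
have E2 : frob2 (x^T *m x - y^T *m y)
    <= 2 * (frob2 (x^T *m x - xs^T *m xs) + frob2 (y^T *m y - ys^T *m ys)).
  have -> : x^T *m x - y^T *m y = (x^T *m x - ys^T *m ys) - (y^T *m y - ys^T *m ys).
    by rewrite opprB addrA subrK.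
  by rewrite hG frob2_sub_le.
set a := frob2 (x - xs) in E1 E2x *; set b := frob2 (y - ys) in E1 E2y *.
have -> : (a + b) ^+ 2 = a ^+ 2 + 2 * (a * b) + b ^+ 2 by ring.
lra.
Qed.

End Frobenius.

Section AttentionLoss.
Variable R : rcfType.

Lemma mx_sqrt_eig_tr n (W : 'M[R]_n) (lam : 'rV[R]_n) :
  (mx_sqrt_eig W lam)^T = mx_sqrt_eig W lam.
Proof. by rewrite /mx_sqrt_eig !trmx_mul trmxK tr_diag_mx mulmxA. Qed.

Lemma mx_sqrt_eig_sqr n (W : 'M[R]_n) (lam : 'rV[R]_n) :
  orthonormal_cols W -> (forall i, 0 <= lam 0 i) ->
  mx_sqrt_eig W lam *m mx_sqrt_eig W lam = W *m diag_mx lam *m W^T.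
Proof.
move=> hW hlam; rewrite /mx_sqrt_eig !mulmxA -(mulmxA _ W^T W) hW mulmx1.
rewrite -(mulmxA W) mulmx_diag; congr (W *m diag_mx _ *m _).
by apply/rowP => j; rewrite !mxE -expr2 sqr_sqrtr.
Qed.

Lemma mx_sqrt_eig_unit n (W : 'M[R]_n) (lam : 'rV[R]_n) :
  orthonormal_cols W -> (forall i, 0 < lam 0 i) -> mx_sqrt_eig W lam \in unitmx.
Proof.
move=> hW hlam; rewrite unitmxE unitfE !det_mulmx det_tr mulrAC -{1}det_tr -det_mulmx hW.
rewrite det1 mul1r det_diag; apply/prodf_neq0 => i _.
by rewrite mxE sqrtr_eq0 -ltNge.
Qed.

Lemma mx_sqrt_eig_opnorm n (W : 'M[R]_n) (lam : 'rV[R]_n) :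
  orthonormal_cols W -> (forall i, 0 <= lam 0 i) ->
  sq_opnorm_le (mx_sqrt_eig W lam) (vmax lam).
Proof.
move=> hW hlam; apply: sq_opnorm_le_svd => //; first exact: vmax_ge0.
by move=> j; rewrite mxE sqr_sqrtr ?vmax_ge.
Qed.

Lemma Pnorm2_sqrtE p d (Sh : 'M[R]_d) (A : 'M[R]_(p, d)) (B : 'M[R]_d) :
  Pnorm2 (Sh^T *m Sh) A B = frob2 A + frob2 (Sh *m B).
Proof.
rewrite /Pnorm2 /Pmat tr_col_mx mul_row_block mul_row_col !mulmx1 !mulmx0 addr0 add0r.
by rewrite mxtraceD /frob2 trmx_mul !mulmxA.
Qed.

Lemma Qobj_sqrt_coordsE p d (Sigma Sh : 'M[R]_d) (M : 'M[R]_(p, d)) (Omega : 'M[R]_p)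
    (A : 'M[R]_(p, d)) (B : 'M[R]_d) :
  Sh^T = Sh -> Sigma = Sh *m Sh ->
  let x := A *m Sh in let y := Sh *m B *m Sh in
  Qobj Sigma Sh M Omega A B =
    2^-1 * \tr Omega + 2^-1 * frob2 (x *m y^T - M *m Sh) + 8^-1 * frob2 (x^T *m x - y^T *m y).
Proof.
move=> ShT -> x y; rewrite /Qobj /Lpop /Rreg.
have -> : A *m (Sh *m Sh) *m B^T *m Sh = x *m y^T by rewrite !trmx_mul ShT !mulmxA.
have -> : Sh *m (A^T *m A - B^T *m (Sh *m Sh) *m B) *m Sh = x^T *m x - y^T *m y.
  by rewrite mulmxBr mulmxBl !trmx_mul ShT !mulmxA.
by [].
Qed.

Lemma Qobj_ge_half_tr p d (Sigma Sh : 'M[R]_d) (M : 'M[R]_(p, d)) (Omega : 'M[R]_p)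
    (A : 'M[R]_(p, d)) (B : 'M[R]_d) :
  2^-1 * \tr Omega <= Qobj Sigma Sh M Omega A B.
Proof.
rewrite /Qobj /Lpop /Rreg; set a := frob2 _; set b := frob2 _.
have a0 : 0 <= a := frob2_ge0 _; have b0 : 0 <= b := frob2_ge0 _.
lra.
Qed.

Lemma Sset_balanced p d (Sh : 'M[R]_d) (M : 'M[R]_(p, d)) (U : 'M[R]_(p, d))
    (g : 'rV[R]_d) (V : 'M[R]_d) (A : 'M[R]_(p, d)) (B : 'M[R]_d) :
  Sh \in unitmx -> orthonormal_cols U -> orthonormal_cols V -> (forall i, 0 <= g 0 i) ->
  M *m Sh = U *m diag_mx g *m V^T -> Sset Sh U g V A B ->
  let x := A *m Sh in let y := Sh *m B *m Sh in
  [/\ x *m y^T = M *m Sh, x^T *m x = y^T *m y,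
      sq_opnorm_le x (vmax g) & sq_opnorm_le y (vmax g)].
Proof.
move=> Shu hU hV hg hMSh [J [hJ [-> ->]]] x y.
set Gh := diag_mx (map_mx Num.sqrt g).
have -> : x = U *m Gh *m J^T by rewrite /x -mulmxA mulVmx // mulmx1.
have -> : y = V *m Gh *m J^T.
  by rewrite /y !mulmxA mulmxV // mul1mx -mulmxA mulVmx // mulmx1.
have GhT : Gh^T = Gh by rewrite tr_diag_mx.
have hGh j : (map_mx Num.sqrt g) 0 j ^+ 2 <= vmax g by rewrite mxE sqr_sqrtr ?vmax_ge.
split; last 2 first.
- exact: sq_opnorm_le_svd (vmax_ge0 g) hGh.
- exact: sq_opnorm_le_svd (vmax_ge0 g) hGh.
- rewrite hMSh !trmx_mul trmxK GhT !mulmxA -(mulmxA _ J^T J) hJ mulmx1 -(mulmxA _ Gh Gh).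
  rewrite mulmx_diag; congr (U *m diag_mx _ *m _).
  by apply/rowP => j; rewrite !mxE -expr2 sqr_sqrtr.
- by rewrite !trmx_mul trmxK GhT !mulmxA -(mulmxA _ U^T U) hU -(mulmxA _ V^T V) hV !mulmx1.
Qed.

Lemma sqrt_beta_ge (kap K1 oS : R) :
  0 <= K1 -> 0 <= oS ->
  3 * K1 + 3 / 2 * oS ^+ 2
    <= Num.sqrt ((14 + 7 * kap ^+ 2) * K1 ^+ 2 + 21 * oS ^+ 2 * K1 + 7 * oS ^+ 4).
Proof.
move=> K0 o0; have z0 : 0 <= 3 * K1 + 3 / 2 * oS ^+ 2 by have := sqr_ge0 oS; lra.
rewrite -(ger0_norm z0) -sqrtr_sqr ler_wsqrtr //.
have : 0 <= kap ^+ 2 * K1 ^+ 2 by rewrite mulr_ge0 ?sqr_ge0.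
have : 0 <= oS ^+ 2 * K1 by rewrite mulr_ge0 ?sqr_ge0.
have -> : oS ^+ 4 = oS ^+ 2 * oS ^+ 2 by rewrite -exprD.
rewrite !expr2; nra.
Qed.

Lemma descent_bound_arith (kap s oS r D : R) :
  0 <= s -> 0 <= oS -> 0 <= D -> D <= 1 -> 0 <= r -> r <= oS * D ->
  3 * s * r + 3 / 4 * r ^+ 2
    <= Num.sqrt ((14 + 7 * kap ^+ 2) * (2 * s * oS) ^+ 2
                 + 21 * oS ^+ 2 * (2 * s * oS) + 7 * oS ^+ 4) / 2 * D.
Proof.
move=> s0 o0 D0 D1 r0 rD.
have hb := sqrt_beta_ge kap (mulr_ge0 (mulr_ge0 (ler0n _ 2) s0) o0) o0.
have h1 : s * r <= s * (oS * D) by rewrite ler_wpM2l.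
have h2 : r ^+ 2 <= oS ^+ 2 * D.
  apply: (le_trans (y := (oS * D) ^+ 2)); first by rewrite ler_pXn2r ?nnegrE ?mulr_ge0.
  by rewrite exprMn ler_wpM2l ?sqr_ge0 // expr2 ler_piMr.
have h3 := ler_wpM2r D0 hb.
lra.
Qed.

End AttentionLoss.

Theorem lemma2 (R : rcfType) (p d : nat)
  (Sigma : 'M[R]_d) (W : 'M[R]_d) (lam : 'rV[R]_d)
  (M : 'M[R]_(p, d)) (Omega : 'M[R]_p)
  (U : 'M[R]_(p, d)) (g : 'rV[R]_d) (V : 'M[R]_d)
  (th th_s : 'M[R]_(p, d) * 'M[R]_d) :
  (* Sigma full-rank covariance, given by its eigendecomposition *)
  orthonormal_cols W ->
  (forall i, 0 < lam 0 i) ->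
  Sigma = W *m diag_mx lam *m W^T ->
  (* Omega is a covariance matrix *)
  psd_sym Omega ->
  (d <= p)%N ->
  let Sh := mx_sqrt_eig W lam in
  \rank (M *m Sh) = d ->
  (* thin SVD of M Sigma^{1/2} *)
  orthonormal_cols U -> orthonormal_cols V -> (forall i, 0 <= g 0 i) ->
  M *m Sh = U *m diag_mx g *m V^T ->
  let Q := Qobj Sigma Sh M Omega in
  forall Qstar : R,
  (forall A1 B1, Qstar <= Q A1 B1) -> (exists A1 B1, Q A1 B1 = Qstar) ->
  let opS := vmax lam in
  let kappa := vmax lam / vmin lam in
  let K0 := 2 * vmin g * vmin lam in
  let K1 := 2 * vmax g * vmax lam in
  let eps0 := Num.min 1 (Num.min (Num.sqrt K0 / Num.sqrt (3 * K1 * opS))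
                                 (Num.sqrt (Num.sqrt (K0 / 2)) / Num.sqrt opS)) in
  let beta := (14 + 7 * kappa ^+ 2) * K1 ^+ 2 + 21 * opS ^+ 2 * K1 + 7 * opS ^+ 4 in
  (* th_s is a P-norm projection of th onto S *)
  Sset Sh U g V th_s.1 th_s.2 ->
  (forall A1 B1, Sset Sh U g V A1 B1 ->
     Pnorm2 Sigma (th.1 - th_s.1) (th.2 - th_s.2) <= Pnorm2 Sigma (th.1 - A1) (th.2 - B1)) ->
  (* th is eps0-close to S *)
  Num.sqrt (Pnorm2 Sigma (th.1 - th_s.1) (th.2 - th_s.2)) <= eps0 ->
  Q th.1 th.2 - Qstar <= Num.sqrt beta / 2 * Pnorm2 Sigma (th.1 - th_s.1) (th.2 - th_s.2).
Proof.
move=> hW hlam hSig _ _ Sh _ hU hV hg hMSh Q Qstar _ [A1 [B1 <-]] opS kappa K0 K1 eps0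
  beta hS _ hclose.
(* The bound holds at every point of S. *)
have lam_ge0 i : 0 <= lam 0 i := ltW (hlam i).
have ShT : Sh^T = Sh := mx_sqrt_eig_tr W lam.
have SigmaE : Sigma = Sh *m Sh by rewrite hSig mx_sqrt_eig_sqr.
have Sh_unit : Sh \in unitmx := mx_sqrt_eig_unit hW hlam.
have [hfit hbal hxs hys] := Sset_balanced Sh_unit hU hV hg hMSh hS.
have [_ hSh] := mx_sqrt_eig_opnorm hW lam_ge0.
set D := Pnorm2 Sigma _ _.
have DE : D = frob2 (th.1 - th_s.1) + frob2 (Sh *m (th.2 - th_s.2)).
  by rewrite /D SigmaE -{1}ShT Pnorm2_sqrtE.
have D0 : 0 <= D by rewrite DE addr_ge0 ?frob2_ge0.
have D1 : D <= 1.
  have eps0_le1 : eps0 <= 1 by rewrite /eps0 ge_min lexx.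
  by rewrite -(ler_sqrt _ ler01) sqrtr1 (le_trans hclose).
have hr : frob2 (th.1 *m Sh - th_s.1 *m Sh) + frob2 (Sh *m th.2 *m Sh - Sh *m th_s.2 *m Sh)
    <= opS * D.
  rewrite DE mulrDr -!mulmxBl -mulmxBr; apply: lerD.
    by rewrite -frob2_tr trmx_mul -(frob2_tr (th.1 - th_s.1)); apply: hSh.
  by rewrite -frob2_tr trmx_mul -(frob2_tr (Sh *m _)); apply: hSh.
have Qstar_ge := Qobj_ge_half_tr Sigma Sh M Omega A1 B1.
have residual := balanced_residual_le (th.1 *m Sh) (Sh *m th.2 *m Sh) hfit hbal hxs hys.
have := descent_bound_arith kappa (vmax_ge0 g) (vmax_ge0 lam) D0 D1
  (addr_ge0 (frob2_ge0 _) (frob2_ge0 _)) hr.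
rewrite /Q (Qobj_sqrt_coordsE M Omega th.1 th.2 ShT SigmaE) /beta /K1 /opS; lra.
Qed.
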